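(* Let $(G,+,\bullet)$ be an interchange near ring containing an annihilator, i.e. an element $a\in G$ with $a\bullet x = x\bullet a = a$ for every $x\in G$. Then $(G,\bullet)$ is a zero semigroup: in fact $x\bullet y = 0$ for all $x,y\in G$.
   Context: An interchange near ring is a triple $(G,+,\bullet)$ where $(G,+)$ is a group (written additively, not necessarily abelian, with identity $0$) and $\bullet$ is a binary operation on $G$ satisfying the interchange law $(w+x)\bullet(y+z) = (w\bullet y)+(x\bullet z)$ for all $w,x,y,z\in G$. A zero semigroup is a semigroup $(S,\cdot)$ satisfying $w\cdot x = y\cdot z$ for all $w,x,y,z\in S$. *)

Record is_group (G : Type) (add : G -> G -> G) (zero : G) (opp : G -> G) : Prop := {
  grp_assoc : forall x y z, add x (add y z) = add (add x y) z;
  grp_zero_l : forall x, add zero x = x;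
  grp_zero_r : forall x, add x zero = x;
  grp_opp_l : forall x, add (opp x) x = zero;
  grp_opp_r : forall x, add x (opp x) = zero
}.

Definition interchange_near_ring (G : Type) (add : G -> G -> G) (zero : G)
  (opp : G -> G) (mul : G -> G -> G) : Prop :=
  is_group G add zero opp /\
  forall w x y z, mul (add w x) (add y z) = add (mul w y) (mul x z).

Definition zero_semigroup (S : Type) (mul : S -> S -> S) : Prop :=
  (forall x y z, mul x (mul y z) = mul (mul x y) z) /\
  (forall w x y z, mul w x = mul y z).


(* Write the interchange law with the neutral element inserted:
     x • y = (x + 0) • (0 + y) = (x • 0) + (0 • y).
   Applied to x = y = a for an annihilator a this gives a = a + a, and in a
   group the only idempotent of addition is 0, so a = 0.  With 0 now an
   annihilator, the same identity gives x • y = 0 + 0 = 0 for all x, y; a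
   multiplication that is constantly 0 is trivially associative and has all
   products equal, i.e. it is a zero semigroup. *)

Lemma group_idempotent_is_zero (G : Type) (add : G -> G -> G) (zero : G)
  (opp : G -> G) :
  is_group G add zero opp -> forall x, add x x = x -> x = zero.
Proof.
  intros [assoc zero_l _ opp_l _] x Hxx.
  rewrite <- (zero_l x), <- (opp_l x), <- assoc, Hxx.
  reflexivity.
Qed.

Lemma constant_zero_mul_is_zero_semigroup (S : Type) (mul : S -> S -> S)
  (zero : S) :
  (forall x y, mul x y = zero) -> zero_semigroup S mul.
Proof.
  intros Hzero. split; intros; rewrite !Hzero; reflexivity.
Qed.

Section InterchangeNearRing.

Variables (G : Type) (add : G -> G -> G) (zero : G) (opp : G -> G)
  (mul : G -> G -> G).
Hypothesis HG : interchange_near_ring G add zero opp mul.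

Lemma mul_split_through_zero : forall x y,
  mul x y = add (mul x zero) (mul zero y).
Proof.
  destruct HG as [[_ zero_l zero_r _ _] interchange].
  intros x y.
  rewrite <- interchange, zero_r, zero_l.
  reflexivity.
Qed.

(* An annihilator of • must be the additive identity, since it is idempotent. *)
Lemma annihilator_is_zero (a : G) :
  (forall x, mul a x = a /\ mul x a = a) -> a = zero.
Proof.
  intros Ha.
  apply (group_idempotent_is_zero G add zero opp (proj1 HG)).
  assert (Hsplit := mul_split_through_zero a a).
  rewrite (proj1 (Ha a)), (proj2 (Ha zero)), (proj1 (Ha zero)) in Hsplit.
  symmetry. exact Hsplit.
Qed.

Lemma mul_zero_when_zero_annihilates :
  (forall x, mul zero x = zero /\ mul x zero = zero) ->
  forall x y, mul x y = zero.
Proof.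
  intros Hzero x y.
  rewrite mul_split_through_zero, (proj2 (Hzero x)), (proj1 (Hzero y)).
  apply (grp_zero_l _ _ _ _ (proj1 HG)).
Qed.

End InterchangeNearRing.

Theorem proposition2p3 (G : Type) (add : G -> G -> G) (zero : G) (opp : G -> G)
  (mul : G -> G -> G)
  (HG : interchange_near_ring G add zero opp mul)
  (a : G) (Ha : forall x, mul a x = a /\ mul x a = a) :
  zero_semigroup G mul /\ (forall x y, mul x y = zero).
Proof.
  assert (Ha_zero : a = zero) by exact (annihilator_is_zero G add zero opp mul HG a Ha).
  subst a.
  assert (Hmul_zero : forall x y, mul x y = zero)
    by exact (mul_zero_when_zero_annihilates G add zero opp mul HG Ha).
  split.
  - exact (constant_zero_mul_is_zero_semigroup G mul zero Hmul_zero).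
  - exact Hmul_zero.
Qed.
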